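(* Let $q$ be an odd prime power and $s=(q-1)/2$. Let $r_0,r_1$ be positive integers such that $s\mid r_0^2-1$ and $2s\mid r_1^2-1$. Then $$f(x)=\tfrac12 x^{r_0}(1+x^s)+\tfrac12 x^{r_1}(1-x^s)$$ is a permutation polynomial of $\mathbb{F}_q$ and is self-inverse, i.e. $f(f(c))=c$ for all $c\in\mathbb{F}_q$.
   Context: A polynomial $f\in\mathbb{F}_q[x]$ is a permutation polynomial of $\mathbb{F}_q$ if it induces a bijection of $\mathbb{F}_q$. *)

From HB Require Import structures.
From mathcomp Require Import all_boot all_order all_algebra all_field.
Set Implicit Arguments. Unset Strict Implicit. Unset Printing Implicit Defensive.
Import GRing.Theory.
Local Open Scope ring_scope.

Definition permutation_poly (F : finFieldType) (f : {poly F}) : Prop :=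
  bijective (fun x : F => f.[x]).

Definition cor42_poly (F : finFieldType) (s r0 r1 : nat) : {poly F} :=
  (2%:R)^-1 *: ('X^r0 * (1 + 'X^s)) + (2%:R)^-1 *: ('X^r1 * (1 - 'X^s)).

From HB Require Import structures.
From mathcomp Require Import all_boot all_order all_algebra all_field.
Local Open Scope ring_scope.
Import GRing.Theory.

(* For c != 0 the power c ^+ s, s = (q - 1)/2, is 1 or -1.  On the first class
   f acts as x ^+ r0 and on the second as x ^+ r1; both monomials preserve
   their class (r1 is odd), and applying either one twice gives x ^+ r^2,
   which is x since c ^+ s = 1 on the first class, c ^+ 2s = 1 always, and
   r0^2 = 1 mod s, r1^2 = 1 mod 2s. *)

Lemma odd_card_two_neq0 (F : finFieldType) : odd #|F| -> 2%:R != 0 :> F.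
Proof.
move=> oddF; apply/negP => /eqP two0.
have pchar2 : 2%N \in [pchar F] by rewrite inE /= two0 eqxx.
have cardF := card_pprimeChar pchar2.
move: oddF (finNzRing_gt1 F); rewrite [#|F|]cardF.
by case: (logn _ _) => [|n] //; rewrite expnS oddM.
Qed.

Lemma expf_card_pred (F : finFieldType) (c : F) : c != 0 -> c ^+ #|F|.-1 = 1.
Proof.
move=> c_neq0; apply: (mulfI c_neq0).
by rewrite mulr1 -exprS prednK ?expf_card // (ltn_trans _ (finNzRing_gt1 F)).
Qed.

Lemma expf_half_card_sqr {F : finFieldType} (c : F) :
  odd #|F| -> c != 0 -> (c ^+ (#|F|.-1)./2) ^+ 2 = 1.
Proof.
move=> oddF c_neq0; rewrite -exprM muln2 even_halfK ?expf_card_pred //.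
by move: oddF; case: #|F|.
Qed.

Lemma expr_sqr_mod {R : pzSemiRingType} {x : R} {n r : nat} :
  x ^+ n = 1 -> (r ^ 2 = 1 %[mod n])%N -> (x ^+ r) ^+ r = x.
Proof.
move=> xn1 r2_mod; rewrite -exprM mulnn -(expr_mod _ xn1) r2_mod.
by rewrite (expr_mod _ xn1) expr1.
Qed.

Lemma sqr_eq1_mod {d r : nat} : (0 < r)%N -> (d %| r ^ 2 - 1)%N ->
  (r ^ 2 = 1 %[mod d])%N.
Proof. by move=> r_gt0; rewrite -(eqn_mod_dvd d) ?expn_gt0 ?r_gt0 // => /eqP. Qed.

Lemma odd_sqr_eq1_mod_double {s r : nat} : (r ^ 2 = 1 %[mod s.*2])%N -> odd r.
Proof.
move=> /(congr1 (modn^~ 2%N)); rewrite !modn_dvdm ?dvdn2 ?odd_double //.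
by rewrite !modn2 oddX /= => /eqP; rewrite eqb1.
Qed.

Section Corollary42.

Variables (F : finFieldType) (s r0 r1 : nat).
Hypothesis oddF : odd #|F|.
Hypothesis s_def : s = (#|F|.-1)./2.
Hypotheses (r0_gt0 : (0 < r0)%N) (r1_gt0 : (0 < r1)%N).
Hypothesis r0_sqr_mod : (r0 ^ 2 = 1 %[mod s])%N.
Hypothesis r1_sqr_mod : (r1 ^ 2 = 1 %[mod s.*2])%N.

Local Notation f := (cor42_poly F s r0 r1).

Lemma horner_cor42_poly (c : F) :
  f.[c] = 2%:R^-1 * (c ^+ r0 * (1 + c ^+ s))
          + 2%:R^-1 * (c ^+ r1 * (1 - c ^+ s)).
Proof. by rewrite /cor42_poly !hornerE. Qed.

Lemma horner_cor42_poly0 : f.[0] = 0.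
Proof.
rewrite horner_cor42_poly !expr0n /= (gtn_eqF r0_gt0) (gtn_eqF r1_gt0).
by rewrite !mul0r !mulr0 addr0.
Qed.

Lemma invr2_mul2 (x : F) : 2%:R^-1 * (x * (1 + 1)) = x.
Proof.
by rewrite -[1 + 1]/(2%:R) mulrC -mulrA mulfV ?odd_card_two_neq0 ?mulr1.
Qed.

Lemma horner_cor42_poly_expr1 (c : F) : c ^+ s = 1 -> f.[c] = c ^+ r0.
Proof.
by move=> cs1; rewrite horner_cor42_poly cs1 subrr !mulr0 addr0 invr2_mul2.
Qed.

Lemma horner_cor42_poly_exprN1 (c : F) : c ^+ s = -1 -> f.[c] = c ^+ r1.
Proof.
move=> csN1; rewrite horner_cor42_poly csN1 subrr !mulr0 add0r opprK.
exact: invr2_mul2.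
Qed.

Lemma cor42_poly_involutive : involutive (fun c : F => f.[c]).
Proof.
move=> c; have [-> | c_neq0] := eqVneq c 0; first by rewrite !horner_cor42_poly0.
have := expf_half_card_sqr c oddF c_neq0; rewrite -s_def => /eqP.
rewrite sqrf_eq1 => /orP[/eqP cs1 | /eqP csN1].
- have r0_cs1 : (c ^+ r0) ^+ s = 1 by rewrite exprAC cs1 expr1n.
  by rewrite !horner_cor42_poly_expr1 // (expr_sqr_mod cs1 r0_sqr_mod).
- have c2s1 : c ^+ s.*2 = 1 by rewrite -muln2 exprM csN1 sqrrN expr1n.
  have r1_csN1 : (c ^+ r1) ^+ s = -1.
    by rewrite exprAC csN1 -signr_odd (odd_sqr_eq1_mod_double r1_sqr_mod).
  by rewrite !horner_cor42_poly_exprN1 // (expr_sqr_mod c2s1 r1_sqr_mod).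
Qed.

End Corollary42.

Theorem corollary4p2 (F : finFieldType) (s r0 r1 : nat) :
  odd #|F| ->
  s = (#|F|.-1)./2 ->
  (0 < r0)%N -> (0 < r1)%N ->
  (s %| r0 ^ 2 - 1)%N -> (s.*2 %| r1 ^ 2 - 1)%N ->
  permutation_poly (cor42_poly F s r0 r1) /\
  (forall c : F, (cor42_poly F s r0 r1).[(cor42_poly F s r0 r1).[c]] = c).
Proof.
move=> oddF s_def r0_gt0 r1_gt0.
move=> /(sqr_eq1_mod r0_gt0) r0_mod /(sqr_eq1_mod r1_gt0) r1_mod.
have f_inv := cor42_poly_involutive _ _ _ _ oddF s_def r0_gt0 r1_gt0 r0_mod r1_mod.
by split; [exact: inv_bij | exact: f_inv].
Qed.
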